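(* For positive integers $\ell,m$, let $A(\ell,m)$ be the $(\ell+m)\times(\ell+m)$ coloring matrix with entries $a_{ij}=0$ if $i,j>\ell$ and $a_{ij}=1$ otherwise (i.e., block form with an $\ell\times\ell$ all-ones upper-left block, all-ones off-diagonal blocks, and an $m\times m$ zero lower-right block). Then for all positive integers $\ell,m,n$, $$t_{A(\ell,m)}(n)=\sum_{k=0}^{n-1}\frac{2}{n}\binom{n}{k}\binom{2n-3}{n-k-1}\ell^{n-k}m^k;$$ for $1\le i\le\ell$, $$t_{A(\ell,m)}^{(i)}(n)=\sum_{k=0}^{n-1}\frac{1}{n}\binom{n}{k}\binom{2n-2}{n-k-1}\ell^{n-k-1}m^k;$$ and for $\ell+1\le i\le\ell+m$ and $n\ge2$, $$t_{A(\ell,m)}^{(i)}(n)=\sum_{k=1}^{n-1}\frac{1}{n-1}\binom{n-1}{k-1}\binom{2n-2}{n-k-1}\ell^{n-k}m^{k-1}.$$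
   Context: A plane tree is an unlabeled rooted tree in which the children of every vertex are linearly ordered. A coloring matrix is a square matrix $A=(a_{ij})$ with entries in $\{0,1\}$. An $A$-coloring of a plane tree assigns to each vertex a color (an index of a row of $A$) such that whenever a vertex of color $j$ is a child of a vertex of color $i$, $a_{ij}=1$. Let $t_A(n)$ be the number of pairs (plane tree with $n$ vertices, $A$-coloring of it) and $t_A^{(i)}(n)$ the number of those with root color $i$. Binomial coefficients $\binom{a}{b}$ with $b<0$ or $b>a\ge0$ are $0$. *)

From mathcomp Require Import all_boot all_order all_algebra.
From Stdlib Require Lists.List.
Set Implicit Arguments. Unset Strict Implicit. Unset Printing Implicit Defensive.
Import Order.TTheory GRing.Theory Num.Theory.

(* A plane tree whose vertices carry colors in 'I_N.  Such an object is
   exactly a pair (plane tree, assignment of a color to each vertex):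
   children are ordered by the list order. *)
Inductive ctree (N : nat) : Type :=
  CNode : 'I_N -> list (ctree N) -> ctree N.

Definition root_color N (t : ctree N) : 'I_N := let: CNode c _ := t in c.

Fixpoint csize N (t : ctree N) : nat :=
  let: CNode _ ts := t in
  ((fix sz (l : list (ctree N)) : nat :=
     match l with nil => 0 | s :: l' => csize s + sz l' end) ts).+1.

(* coloring matrix A (entries 0/1 as booleans): whenever a vertex of color j
   is a child of a vertex of color i, A i j = true. *)
Fixpoint valid N (A : 'M[bool]_N) (t : ctree N) : bool :=
  let: CNode c ts := t in
  (fix vl (l : list (ctree N)) : bool :=
     match l with
     | nil => true
     | s :: l' => [&& A c (root_color s), valid A s & vl l']
     end) ts.

Local Open Scope ring_scope.
Definition card_is (T : Type) (P : T -> Prop) (k : rat) : Prop :=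
  exists s : list T, Stdlib.Lists.List.NoDup s /\ (forall x, Stdlib.Lists.List.In x s <-> P x)
                     /\ (size s)%:R = k.

Definition tA_is N (A : 'M[bool]_N) (n : nat) (k : rat) : Prop :=
  card_is (fun t : ctree N => csize t = n /\ valid A t) k.

Definition tAi_is N (A : 'M[bool]_N) (i : 'I_N) (n : nat) (k : rat) : Prop :=
  card_is (fun t : ctree N => [/\ csize t = n, valid A t & root_color t = i]) k.

(* A(l,m), with 0-based indices: entry (i,j) is 0 iff i >= l and j >= l. *)
Definition Alm (l m : nat) : 'M[bool]_(l + m) :=
  \matrix_(i, j) ~~ ((l <= i)%N && (l <= j)%N).

(* Removing the root of a plane tree leaves an ordered forest, and removing the
   first tree of a forest leaves a forest.  Hence the numbers a_n, b_n of
   A(l,m)-colored forests with n vertices that can hang below a vertex of color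
   <= l, resp. > l, satisfy
     a_(n+1) = sum_k (l a_k + m b_k) a_(n-k),   b_(n+1) = sum_k l a_k b_(n-k),
   i.e. P = 1 + x (l P + m Q) P and Q = 1 + l x P Q for their series.  Then
   W = x P Q satisfies Q = 1 + l W, P = (1 + l W) (1 + m W) and W = x phi(W) with
   phi(t) = (1 + m t) (1 + l t)^2, and Lagrange inversion
   [x^n] W^k = (k/n) [t^(n-k)] phi(t)^n turns [x^n] P and [x^n] Q into the binomial
   sums of the statement.  Series are handled as polynomials modulo x^N, and
   Lagrange inversion is proved for any polynomial phi by checking that both sides
   satisfy the same recurrence in n. *)

From HB Require Import structures.
From mathcomp Require Import all_boot all_order all_algebra.
From mathcomp Require Import zify ring.
Import Order.TTheory GRing.Theory Num.Theory.
Set Implicit Arguments. Unset Strict Implicit. Unset Printing Implicit Defensive.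

Section ColoredTrees.
Variable N : nat.
Implicit Types (c : 'I_N) (t : ctree N) (ts : seq (ctree N)).

Fixpoint ctree_ind_in (P : ctree N -> Prop)
    (IH : forall c ts, (forall t, List.In t ts -> P t) -> P (CNode c ts)) t : P t :=
  let: CNode c ts := t in
  IH c ts ((fix in_ts ts : forall t, List.In t ts -> P t :=
              if ts is s :: ts' then
                fun t (st : List.In t (s :: ts')) =>
                  match st with
                  | or_introl e => eq_ind s P (ctree_ind_in IH s) t e
                  | or_intror st' => in_ts ts' t st'
                  end
              else fun t (st : List.In t nil) => False_ind _ st) ts).

Fixpoint ctree_encode t : GenTree.tree 'I_N :=
  let: CNode c ts := t in GenTree.Node 0 (GenTree.Leaf c :: map ctree_encode ts).

Fixpoint ctree_decode (x : GenTree.tree 'I_N) : option (ctree N) :=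
  if x is GenTree.Node _ (GenTree.Leaf c :: xs) then Some (CNode c (pmap ctree_decode xs))
  else None.

Lemma ctree_encodeK : pcancel ctree_encode ctree_decode.
Proof.
elim/ctree_ind_in => c ts IH /=; congr (Some (CNode c _)).
elim: ts IH => //= s ts IHts IH.
rewrite IH /=; last by left.
by rewrite IHts // => t st; apply: IH; right.
Qed.

End ColoredTrees.

HB.instance Definition _ N := Countable.copy (ctree N) (pcan_type (@ctree_encodeK N)).

Lemma csize_cons N c (t : ctree N) ts :
  csize (CNode c (t :: ts)) = csize t + csize (CNode c ts).
Proof. by rewrite addnS. Qed.

Lemma valid_cons N (A : 'M[bool]_N) c (t : ctree N) ts :
  valid A (CNode c (t :: ts)) = [&& A c (root_color t), valid A t & valid A (CNode c ts)].
Proof. by []. Qed.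

Lemma csize_gt0 N (t : ctree N) : 0 < csize t.
Proof. by case: t. Qed.

Lemma flatten_map_uniq (T U : eqType) (f : T -> seq U) (s : seq T) :
  uniq s -> {in s, forall x, uniq (f x)} ->
  {in s &, forall x y u, u \in f x -> u \in f y -> x = y} ->
  uniq (flatten (map f s)).
Proof.
elim: s => //= x s IHs /andP[xNs s_uniq] f_uniq f_disj.
have f_uniq' : {in s, forall y, uniq (f y)}.
  by move=> y ys; apply/f_uniq/mem_behead.
have f_disj' : {in s &, forall y z u, u \in f y -> u \in f z -> y = z}.
  by move=> y z u ys zs; apply: f_disj; apply: mem_behead.
rewrite cat_uniq f_uniq ?mem_head // IHs // andbT.
apply/hasP => -[u /flatten_mapP[y ys uy] ux].
suff exy : x = y by rewrite exy ys in xNs.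
by apply: (f_disj x y _ _ u) => //; [exact: mem_head | exact: mem_behead].
Qed.

Section Enumeration.
Variables (N : nat) (A : 'M[bool]_N).
Implicit Types (c : 'I_N) (t : ctree N) (ts : seq (ctree N)).

Definition is_forest n c ts := (csize (CNode c ts) == n.+1) && valid A (CNode c ts).

Fixpoint forests (fuel n : nat) c : seq (seq (ctree N)) :=
  if fuel is f.+1 then
    if n is n'.+1 then
      flatten [seq flatten [seq [seq CNode c' s :: r | s <- forests f k c', r <- forests f (n' - k) c]
                           | c' <- [seq c' <- enum 'I_N | A c c']]
              | k <- iota 0 n]
    else [:: [::]]
  else [::].

Lemma forestsS f n c : forests f.+1 n.+1 c =
  flatten [seq flatten [seq [seq CNode c' s :: r | s <- forests f k c', r <- forests f (n - k) c]
                       | c' <- [seq c' <- enum 'I_N | A c c']]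
          | k <- iota 0 n.+1].
Proof. by []. Qed.

Lemma forests_sound fuel n c ts : ts \in forests fuel n c -> is_forest n c ts.
Proof.
elim: fuel n c ts => [|f IHf] [|n] c ts //; first by rewrite inE => /eqP->.
rewrite forestsS => /flatten_mapP[k]; rewrite mem_iota => /andP[_ lt_kn].
move=> /flatten_mapP[c']; rewrite mem_filter => /andP[Acc' _].
move=> /allpairsP[[s r] /= [/IHf/andP[/eqP size_s valid_s] /IHf/andP[/eqP size_r valid_r] ->]].
rewrite /is_forest csize_cons valid_cons size_s size_r Acc' valid_s valid_r !andbT.
apply/eqP; lia.
Qed.

Lemma forests_complete fuel n c ts : n < fuel -> is_forest n c ts -> ts \in forests fuel n c.
Proof.
elim: fuel n c ts => [|f IHf] // [|n] c [|[c' s] r] // lt_nf.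
rewrite /is_forest csize_cons valid_cons => /andP[/eqP size_tr /and3P[Acc' valid_s valid_r]].
have [k size_s] : exists k, csize (CNode c' s) = k.+1 by exists (csize (CNode c' s)).-1.
have := csize_gt0 (CNode c r); rewrite forestsS => size_r.
apply/flatten_mapP; exists k; first by rewrite mem_iota; lia.
apply/flatten_mapP; exists c'; first by rewrite mem_filter Acc' mem_enum.
apply/allpairsP; exists (s, r); split => //=; apply: IHf; try lia.
- by rewrite /is_forest size_s eqxx.
- by rewrite /is_forest valid_r andbT; apply/eqP; lia.
Qed.

Lemma forests_uniq fuel n c : uniq (forests fuel n c).
Proof.
elim: fuel n c => [|f IHf] [|n] c //; rewrite forestsS.
apply: flatten_map_uniq => [|k _|k1 k2 _ _ tr]; first exact: iota_uniq.
  apply: flatten_map_uniq => [|c' _|c1 c2 _ _ tr]; first by rewrite filter_uniq ?enum_uniq.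
    by apply: allpairs_uniq => // -[s r] [s' r'] _ _ [-> ->].
  by move=> /allpairsP[[s r] [_ _ ->]] /allpairsP[[s' r'] [_ _ [-> _]]].
move=> /flatten_mapP[c1 _ /allpairsP[[s r] /= [/forests_sound/andP[/eqP size_s _] _ ->]]].
move=> /flatten_mapP[c2 _ /allpairsP[[s' r'] /= [/forests_sound/andP[/eqP size_s' _] _ [ec es _]]]].
by move: size_s'; rewrite -ec -es size_s => -[].
Qed.

Lemma mem_forests fuel n c ts : n < fuel -> (ts \in forests fuel n c) = is_forest n c ts.
Proof.
by move=> lt_nf; apply/idP/idP; [apply: forests_sound | apply: forests_complete].
Qed.

Definition nforests n c := size (forests n.+1 n c).

Lemma size_forests fuel n c : n < fuel -> size (forests fuel n c) = nforests n c.
Proof.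
move=> lt_nf; apply/perm_size/uniq_perm; rewrite ?forests_uniq // => ts.
by rewrite !mem_forests.
Qed.

Lemma nforests0 c : nforests 0 c = 1.
Proof. by []. Qed.

Lemma nforestsS n c :
  nforests n.+1 c = \sum_(k < n.+1) (\sum_(c' | A c c') nforests k c') * nforests (n - k) c.
Proof.
rewrite [LHS]/nforests forestsS size_flatten /shape sumnE !big_map.
rewrite -val_enum_ord big_map big_enum; apply: eq_bigr => k _.
have le_kn : k <= n := ltn_ord k.
rewrite size_flatten /shape sumnE !big_map big_filter big_enum_cond big_distrl.
by apply: eq_bigr => c' _; rewrite size_allpairs !size_forests ?ltnS ?leq_subr.
Qed.

End Enumeration.

Local Open Scope ring_scope.

Lemma In_mem (T : eqType) (x : T) (s : seq T) : List.In x s <-> x \in s.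
Proof.
elim: s => [|y s IHs] //=; rewrite inE IHs.
by split=> [[->|->]|/orP[/eqP->|->]]; rewrite ?eqxx ?orbT //; [left | right].
Qed.

Lemma uniq_NoDup (T : eqType) (s : seq T) : uniq s -> List.NoDup s.
Proof.
elim: s => [|x s IHs] /=; first by constructor.
by case/andP=> xNs /IHs; constructor=> // /In_mem; apply/negP.
Qed.

Lemma card_is_uniq (T : eqType) (P : T -> Prop) (s : seq T) :
  uniq s -> (forall x, x \in s <-> P x) -> card_is P (size s)%:R.
Proof.
move=> s_uniq sP; exists s; split; [exact: uniq_NoDup | split=> // x].
by split=> [/In_mem/sP | /sP/In_mem].
Qed.

Section Counting.
Variables (N : nat) (A : 'M[bool]_N).

Lemma tAi_is_nforests n c : tAi_is A c n.+1 (nforests A n c)%:R.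
Proof.
rewrite /nforests -(size_map (CNode c)); apply: card_is_uniq.
  by rewrite map_inj_uniq ?forests_uniq // => ts ts' [].
move=> [c' ts]; split.
- by case/mapP=> ts' + [-> ->]; rewrite mem_forests // => /andP[/eqP -> ->].
- case=> size_t valid_t rc; have {rc}-> : c = c' by rewrite -rc.
  by apply: map_f; rewrite mem_forests // /is_forest size_t valid_t eqxx.
Qed.

Lemma tA_is_nforests n : tA_is A n.+1 (\sum_c nforests A n c)%:R.
Proof.
set s := flatten [seq map (CNode c) (forests A n.+1 n c) | c <- enum 'I_N].
have -> : (\sum_c nforests A n c)%N = size s.
  rewrite size_flatten /shape sumnE !big_map -enumT big_enum.
  by apply: eq_bigr => c _; rewrite size_map.
apply: card_is_uniq.
  apply: flatten_map_uniq => [|c _|c c' _ _ t]; first exact: enum_uniq.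
    by rewrite map_inj_uniq ?forests_uniq // => ts ts' [].
  by move=> /mapP[ts _ ->] /mapP[ts' _ []].
move=> [c ts]; split.
- case/flatten_mapP=> c' _ /mapP[ts' + [-> ->]].
  by rewrite mem_forests // => /andP[/eqP -> ->].
- case=> size_t valid_t; apply/flatten_mapP; exists c; rewrite ?mem_enum //.
  by apply: map_f; rewrite mem_forests // /is_forest size_t valid_t eqxx.
Qed.

End Counting.

Lemma dvdXn_subP (R : fieldType) N (p q : {poly R}) :
  reflect (forall i, (i < N)%N -> p`_i = q`_i) ('X^N %| p - q).
Proof.
apply: (iffP (dvdpP _ _)) => [[r pq] i lt_iN | eq_pq].
  by apply/eqP; rewrite -subr_eq0 -coefB pq coefMXn lt_iN.
have take0 : take_poly N (p - q) = 0.
  apply/polyP => i; rewrite coef_take_poly coef0 coefB.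
  by case: ltnP => // /eq_pq ->; rewrite subrr.
by exists (drop_poly N (p - q)); rewrite -[LHS](poly_take_drop N) take0 add0r.
Qed.

Section TruncatedSeries.
Variables (R : fieldType) (N : nat).

Lemma coef_convolution (S T : {poly R}) (s t : nat -> R) n :
  (n < N)%N -> (forall i, (i < N)%N -> S`_i = s i) -> (forall i, (i < N)%N -> T`_i = t i) ->
  (S * T)`_n = \sum_(k < n.+1) s k * t (n - k)%N.
Proof.
move=> lt_nN Ss Tt; rewrite coefM; apply: eq_bigr => k _.
have le_kn : (k <= n)%N := ltn_ord k.
by rewrite Ss ?Tt //; lia.
Qed.

Lemma renewal_series (c s : nat -> R) :
  s 0%N = 1 -> (forall n, s n.+1 = \sum_(k < n.+1) c k * s (n - k)%N) ->
  'X^N %| \poly_(i < N) s i - (1 + 'X * \poly_(i < N) c i * \poly_(i < N) s i).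
Proof.
move=> s0 sS; apply/dvdXn_subP => -[|n] lt_nN.
  by rewrite coefD coef1 coef_poly lt_nN -mulrA coefXM /= s0 addr0.
rewrite coefD coef1 coef_poly lt_nN -mulrA coefXM /= add0r sS.
by rewrite (coef_convolution (s := c) (t := s) (ltnW lt_nN)) // => i lt_iN; rewrite coef_poly lt_iN.
Qed.

End TruncatedSeries.

Lemma coefX_deriv (R : nzRingType) (p : {poly R}) i : ('X * p^`())`_i = i%:R * p`_i.
Proof. by rewrite coefXM coef_deriv; case: i => [|i] //=; rewrite ?mul0r // mulr_natl. Qed.

Lemma X_derivXn (R : comNzRingType) k : 'X * ('X^k)^`() = k%:R *: ('X^k : {poly R}).
Proof.
rewrite derivXn -mulr_natl mulrCA -exprS scaler_nat.
by case: k => [|k]; rewrite ?mulr0n ?mul0r // mulr_natl.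
Qed.

Section LagrangeInversion.
Variables (R : fieldType) (phi : {poly R}).
Hypothesis charR0 : [pchar R] =i pred0.

(* The value (k/n) [t^(n-k)] phi^n of [x^n] W^k; n = 0 is separate since k / 0 = 0. *)
Definition lagrange_coef n k : R :=
  if n is 0 then (k == 0)%:R else k%:R / n%:R * ('X^k * phi ^+ n)`_n.

Lemma natrS_neq0 n : (n.+1%:R : R) != 0.
Proof. by move/pcharf0P: charR0 => ->. Qed.

Lemma X_deriv_Xn_phi k :
  'X * ('X^k * phi)^`() = \sum_(j < size phi) ((k + j)%:R * phi`_j) *: 'X^(k + j).
Proof.
rewrite -[in LHS](coefK phi) poly_def mulr_sumr linear_sum mulr_sumr /=.
apply: eq_bigr => j _; rewrite -scalerAr derivZ -scalerAr -exprD X_derivXn.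
by rewrite scalerA mulrC.
Qed.

Lemma lagrange_coef1S k : lagrange_coef 1 k.+1 = \sum_(j < size phi) phi`_j * lagrange_coef 0 (k + j).
Proof.
rewrite /= divr1 exprS -mulrA coefXM expr1 coefXnM /=.
case: k => [|k] /=; last by rewrite mulr0 big1 // => j _; rewrite mulr0.
by rewrite mul1r -horner_coef0 horner_coef; apply: eq_bigr => j _; rewrite expr0n.
Qed.

Lemma lagrange_coefSS n k :
  lagrange_coef n.+2 k.+1 = \sum_(j < size phi) phi`_j * lagrange_coef n.+1 (k + j).
Proof.
(* C and D are related by the coefficient of x^(n+1) in x (x^k phi^(n+2))'. *)
set C := ('X^k * phi ^+ n.+2)`_n.+1.
set D := ('X^(k.+1) * phi^`() * phi ^+ n.+1)`_n.+1.
have sum_CD : \sum_(j < size phi) phi`_j * lagrange_coef n.+1 (k + j) = (k%:R * C + D) / n.+1%:R.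
  have -> : k%:R * C + D = ('X * ('X^k * phi)^`() * phi ^+ n.+1)`_n.+1.
    have -> : 'X * ('X^k * phi)^`() * phi ^+ n.+1 =
        k%:R *: ('X^k * phi ^+ n.+2) + 'X^(k.+1) * phi^`() * phi ^+ n.+1.
      by rewrite derivM mulrDr mulrA X_derivXn -!mul_polyC !exprS; ring.
    by rewrite coefD coefZ.
  rewrite X_deriv_Xn_phi mulr_suml coef_sum mulr_suml; apply: eq_bigr => j _.
  by rewrite -scalerAl coefZ /=; ring.
have deriv_C : n.+1%:R * C = k%:R * C + n.+2%:R * D.
  rewrite -coefX_deriv.
  have -> : 'X * ('X^k * phi ^+ n.+2)^`() =
      k%:R *: ('X^k * phi ^+ n.+2) + n.+2%:R *: ('X^(k.+1) * phi^`() * phi ^+ n.+1).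
    by rewrite derivM mulrDr mulrA X_derivXn deriv_exp -mulr_natr -!mul_polyC !polyC_natr !exprS; ring.
  by rewrite coefD !coefZ.
have eD : D = (n.+1%:R - k%:R) * C / n.+2%:R.
  by rewrite mulrBl deriv_C addrC addKr mulrC mulKf ?natrS_neq0.
rewrite sum_CD /= (exprS 'X) -(mulrA 'X) coefXM /= -/C eD.
by field; rewrite nat1r -natrD !natrS_neq0.
Qed.

Lemma lagrange_coefS n k :
  lagrange_coef n.+1 k.+1 = \sum_(j < size phi) phi`_j * lagrange_coef n (k + j).
Proof. by case: n => [|n]; [exact: lagrange_coef1S | exact: lagrange_coefSS]. Qed.

Lemma lagrange_inversion N (W : {poly R}) k n :
  'X^N %| W - 'X * (phi \Po W) -> (n < N)%N -> (W ^+ k)`_n = lagrange_coef n k.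
Proof.
move=> W_fix; elim: n k => [|n IHn] k lt_nN.
  have W0 : W`_0 = 0 by rewrite (dvdXn_subP _ _ _ W_fix) // coefXM.
  by rewrite -horner_coef0 horner_exp horner_coef0 W0 expr0n.
case: k => [|k]; first by rewrite expr0 coef1 /= mul0r mul0r.
have Wk_eq : 'X^N %| W ^+ k.+1 - 'X * (W ^+ k * (phi \Po W)).
  by rewrite exprSr [X in _ - X]mulrCA -mulrBr dvdp_mull.
rewrite lagrange_coefS (dvdXn_subP _ _ _ Wk_eq) // coefXM /= comp_polyE mulr_sumr coef_sum.
apply: eq_bigr => j _; rewrite -scalerAr coefZ -exprD IHn //.
exact: ltnW.
Qed.

End LagrangeInversion.

Definition phi_lm (R : nzRingType) (l m : R) : {poly R} :=
  (1 + m%:P * 'X) * (1 + l%:P * 'X) ^+ 2.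

Section ForestSeries.
Variables (R : fieldType) (l m : R) (a b : nat -> R).
Hypotheses (a0 : a 0%N = 1) (b0 : b 0%N = 1)
  (aS : forall n, a n.+1 = \sum_(k < n.+1) (l * a k + m * b k) * a (n - k)%N)
  (bS : forall n, b n.+1 = \sum_(k < n.+1) l * a k * b (n - k)%N).
Variable N : nat.

Let P := \poly_(i < N) a i.
Let Q := \poly_(i < N) b i.
(* The identities Q = 1 + l W and P = Q (1 + m W) below give W = x phi(W). *)
Let W := 'X * P * Q.

Lemma seriesP_eq : 'X^N %| P - (1 + 'X * (l%:P * P + m%:P * Q) * P).
Proof.
have -> : l%:P * P + m%:P * Q = \poly_(i < N) (l * a i + m * b i).
  by apply/polyP => i; rewrite coefD !coefCM !coef_poly; case: ifP; rewrite ?mulr0 ?addr0.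
exact: renewal_series.
Qed.

Lemma seriesQ_eq : 'X^N %| Q - (1 + l%:P * W).
Proof.
have -> : l%:P * W = 'X * \poly_(i < N) (l * a i) * Q.
  have -> : \poly_(i < N) (l * a i) = l%:P * P.
    by apply/polyP => i; rewrite coefCM !coef_poly; case: ifP; rewrite ?mulr0.
  by rewrite /W; ring.
exact: renewal_series.
Qed.

Lemma seriesP_factor : 'X^N %| P - Q * (1 + m%:P * W).
Proof.
have -> : P - Q * (1 + m%:P * W) =
    Q * (P - (1 + 'X * (l%:P * P + m%:P * Q) * P)) - P * (Q - (1 + l%:P * W)).
  by rewrite /W; ring.
by rewrite dvdp_sub ?dvdp_mull ?seriesP_eq ?seriesQ_eq.
Qed.

Lemma a_coefW n : (n < N)%N -> a n = ((1 + l%:P * W) * (1 + m%:P * W))`_n.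
Proof.
have : 'X^N %| P - (1 + l%:P * W) * (1 + m%:P * W).
  have -> : P - (1 + l%:P * W) * (1 + m%:P * W) =
      (P - Q * (1 + m%:P * W)) + (1 + m%:P * W) * (Q - (1 + l%:P * W)) by ring.
  by rewrite dvdp_add ?dvdp_mull ?seriesP_factor ?seriesQ_eq.
by move/dvdXn_subP => coef_eq lt_nN; rewrite -coef_eq // coef_poly lt_nN.
Qed.

Lemma b_coefW n : (n < N)%N -> b n = (1 + l%:P * W)`_n.
Proof. by move=> lt_nN; rewrite -(dvdXn_subP _ _ _ seriesQ_eq) // coef_poly lt_nN. Qed.

Lemma W_fixpoint : 'X^N %| W - 'X * (phi_lm l m \Po W).
Proof.
have -> : phi_lm l m \Po W = (1 + m%:P * W) * (1 + l%:P * W) ^+ 2.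
  by rewrite /phi_lm -polyC1 !expr2 !comp_polyM !comp_polyD !comp_polyM !comp_polyC comp_polyX.
have -> : W - 'X * ((1 + m%:P * W) * (1 + l%:P * W) ^+ 2) =
    'X * Q * (P - Q * (1 + m%:P * W))
    + 'X * (1 + m%:P * W) * (Q + 1 + l%:P * W) * (Q - (1 + l%:P * W)).
  by rewrite /W; ring.
by rewrite dvdp_add ?dvdp_mull ?seriesP_factor ?seriesQ_eq.
Qed.

Hypothesis charR0 : [pchar R] =i pred0.

Lemma a_lagrange n : (n < N)%N ->
  a n = (n == 0)%:R + (l + m) * lagrange_coef (phi_lm l m) n 1
        + l * m * lagrange_coef (phi_lm l m) n 2.
Proof.
move=> lt_nN; rewrite a_coefW // -!(lagrange_inversion charR0 _ W_fixpoint lt_nN).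
have -> : (1 + l%:P * W) * (1 + m%:P * W) = 1 + (l + m)%:P * W + (l * m)%:P * W ^+ 2.
  by rewrite polyCD polyCM; ring.
by rewrite !coefD coef1 !coefCM expr1.
Qed.

Lemma b_lagrange n : (n < N)%N -> b n = (n == 0)%:R + l * lagrange_coef (phi_lm l m) n 1.
Proof.
move=> lt_nN; rewrite b_coefW // -(lagrange_inversion charR0 _ W_fixpoint lt_nN).
by rewrite coefD coef1 coefCM expr1.
Qed.

End ForestSeries.

Lemma bin_middle n : 'C((2 * n).+2, n.+1) = (2 * 'C((2 * n).+1, n.+1))%N.
Proof.
have := mul_bin_down (2 * n).+2 n.+1; rewrite succnK (_ : ((2 * n).+2 - n.+1 = n.+1)%N); last lia.
by move=> h; apply/eqP; rewrite -(@eqn_pmul2l n.+1) // -h; apply/eqP; nia.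
Qed.

Lemma coef_exp1CX (R : comNzRingType) (c : R) n i : ((1 + c%:P * 'X) ^+ n)`_i = 'C(n, i)%:R * c ^+ i.
Proof.
elim: n i => [|n IHn] i.
  by rewrite expr0 coef1 bin0n; case: i => [|i]; rewrite ?expr0 ?mulr1 ?mul0r.
rewrite exprS mulrDl mul1r coefD -mulrA coefCM coefXM IHn.
case: i => [|i]; first by rewrite !bin0 !expr0 mulr0 addr0.
by rewrite /= IHn binS natrD exprS; ring.
Qed.

Section ClosedForms.
Variables (R : fieldType) (l m : nat).
Hypothesis charR0 : [pchar R] =i pred0.
Local Notation lr := (l%:R : R).
Local Notation mr := (m%:R : R).
Local Notation A := (1 + mr%:P * 'X).
Local Notation B := (1 + lr%:P * 'X).
Local Notation phi := (phi_lm lr mr).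

Lemma coef_AB a b j : (A ^+ a * B ^+ b)`_j =
  \sum_(i < j.+1) 'C(a, i)%:R * mr ^+ i * ('C(b, j - i)%:R * lr ^+ (j - i)).
Proof. by rewrite coefM; apply: eq_bigr => i _; rewrite !coef_exp1CX. Qed.

Lemma lagrange_coef_phi_lm n k :
  lagrange_coef phi n.+1 k = k%:R / n.+1%:R * ('X^k * (A ^+ n.+1 * B ^+ (2 * n.+1)))`_n.+1.
Proof. by rewrite /= /phi_lm exprMn -exprM mulnC. Qed.

Lemma lagrange_coef_phi_lm12 n :
  (lr + mr) * lagrange_coef phi n.+1 1 + lr * mr * lagrange_coef phi n.+1 2 =
  (A ^+ n.+2 * B ^+ (2 * n.+1))`_n.+1 / n.+2%:R.
Proof.
set U := A ^+ n.+1 * B ^+ (2 * n.+1); set Y := A ^+ n.+2 * B ^+ (2 * n.+1).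
have key : 'X * (Y * B)^`() =
    n.+2%:R *: ((lr + mr) *: ('X * U) + (2 * lr * mr) *: ('X^2 * U)) + (n.+1%:R * lr) *: ('X * Y).
  have dA : A^`() = mr%:P by rewrite !derivE add0r mulr1.
  have dB : B^`() = lr%:P by rewrite !derivE add0r mulr1.
  rewrite /Y /U -mulrA -exprSr derivM !deriv_exp dA dB !succnK (exprS A n.+1) (exprS B (2 * n.+1)).
  move: (A ^+ n.+1) (B ^+ (2 * n.+1)) => a b.
  rewrite -!mul_polyC !polyCM !polyCD !polyC_natr; ring.
rewrite !lagrange_coef_phi_lm expr1.
have := congr1 (fun p : {poly R} => p`_n.+1) key.
rewrite /= coefX_deriv mulrDr mulr1 coefD mulrCA coefCM coefMX /=.
rewrite coefD !coefZ coefD !coefZ (coefXM Y) /= mulrDr mulrA => /addIr eY.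
have -> : Y`_n.+1 = n.+1%:R * Y`_n.+1 / n.+1%:R by rewrite mulrC mulKf ?natrS_neq0.
by rewrite eY; field; rewrite nat1r -natrD !natrS_neq0.
Qed.

Variables (a b : nat -> R).
Hypotheses (a0 : a 0%N = 1) (b0 : b 0%N = 1)
  (aS : forall n, a n.+1 = \sum_(k < n.+1) (lr * a k + mr * b k) * a (n - k)%N)
  (bS : forall n, b n.+1 = \sum_(k < n.+1) lr * a k * b (n - k)%N).

Lemma a_closed n : a n = \sum_(0 <= k < n.+1)
  (1 / n.+1%:R) * ('C(n.+1, k) * 'C(2 * n.+1 - 2, n.+1 - k - 1) * l ^ (n.+1 - k - 1) * m ^ k)%N%:R.
Proof.
rewrite (a_lagrange a0 b0 aS bS charR0 (ltnSn n)).
case: n => [|n]; first by rewrite big_nat1 /= !mulr0 !addr0 divr1 mul1r.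
rewrite add0r lagrange_coef_phi_lm12 coef_AB big_mkord mulr_suml.
apply: eq_bigr => i _; have := ltn_ord i => lt_in.
rewrite (_ : (2 * n.+2 - 2 = 2 * n.+1)%N); last lia.
rewrite (_ : (n.+2 - i - 1 = n.+1 - i)%N); last lia.
by rewrite !natrM !natrX; field; rewrite -natrD natrS_neq0.
Qed.

Lemma b_closed n : b n.+1 = \sum_(1 <= k < n.+2) (1 / (n.+2 - 1)%N%:R) *
  ('C(n.+2 - 1, k - 1) * 'C(2 * n.+2 - 2, n.+2 - k - 1) * l ^ (n.+2 - k) * m ^ (k - 1))%N%:R.
Proof.
rewrite (b_lagrange a0 b0 aS bS charR0 (ltnSn n.+1)) add0r lagrange_coef_phi_lm expr1 coefXM /=.
rewrite coef_AB big_add1 big_mkord mulr_sumr mulr_sumr.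
apply: eq_bigr => i _; have := ltn_ord i => lt_in.
rewrite (_ : (n.+2 - 1 = n.+1)%N); last lia.
rewrite (_ : (2 * n.+2 - 2 = 2 * n.+1)%N); last lia.
rewrite (_ : (n.+2 - i.+1 - 1 = n - i)%N); last lia.
rewrite (_ : (n.+2 - i.+1 = (n - i).+1)%N); last lia.
rewrite (_ : (i.+1 - 1 = i)%N); last lia.
by rewrite !natrM !natrX exprS; field; rewrite nat1r natrS_neq0.
Qed.

Lemma total_closed n : lr * a n.+1 + mr * b n.+1 = \sum_(0 <= k < n.+2)
  (2%:R / n.+2%:R) * ('C(n.+2, k) * 'C(2 * n.+2 - 3, n.+2 - k - 1) * l ^ (n.+2 - k) * m ^ k)%N%:R.
Proof.
have nz k : (k.+1%:R : R) != 0 := natrS_neq0 charR0 k.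
rewrite a_closed b_closed (big_ltn (m := 0%N)) // [RHS](big_ltn (m := 0%N)) // mulrDr -addrA.
rewrite (_ : (2 * n.+2 - 2 = (2 * n).+2)%N); last lia.
rewrite (_ : (2 * n.+2 - 3 = (2 * n).+1)%N); last lia.
congr (_ + _).
  rewrite subn0 (_ : (n.+2 - 0 - 1 = n.+1)%N); last lia.
  by rewrite bin_middle bin0 expn0 !natrM !natrX exprS; field; rewrite -natrD nz.
rewrite !big_distrr -big_split /=; apply: eq_big_nat => k /andP[lt0k lt_kn].
case: k lt0k lt_kn => // j _ lt_jn.
rewrite (_ : (n.+2 - j.+1 - 1 = n - j)%N); last lia.
rewrite (_ : (n.+2 - 1 = n.+1)%N); last lia.
rewrite (_ : (j.+1 - 1 = j)%N); last lia.
rewrite (_ : (n.+2 - j.+1 = (n - j).+1)%N); last lia.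
have bin_low : (n.+2 * 'C(n.+1, j) = j.+1 * 'C(n.+2, j.+1))%N by rewrite -mul_bin_diag mulnC.
have bin_up : ((n.+2 + j) * 'C((2 * n).+2, n - j) = (2 * n).+2 * 'C((2 * n).+1, n - j))%N.
  rewrite (mul_bin_down (2 * n).+2 (n - j)) (_ : ((2 * n).+2 - (n - j) = n.+2 + j)%N) //; lia.
rewrite !natrM !natrX.
have [-> ->] : ('C(n.+1, j)%:R = j.+1%:R / n.+2%:R * 'C(n.+2, j.+1)%:R :> R) /\
    ('C((2 * n).+2, n - j)%:R = (2 * n).+2%:R / (n.+2 + j)%N%:R * 'C((2 * n).+1, n - j)%:R :> R).
  have nzj : ((n.+2 + j)%N%:R : R) != 0 by rewrite addSn nz.
  split; [apply: (mulfI (nz n.+1)) | apply: (mulfI nzj)].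
    by rewrite -natrM bin_low natrM mulrA mulrCA divff ?mulr1 ?nz.
  by rewrite -natrM bin_up natrM mulrA mulrCA divff ?mulr1.
by rewrite !exprS; field; rewrite nat1r -!natrD; apply/and3P; split; exact: nz.
Qed.

End ClosedForms.

Section AlmCounts.
Variables (l m : nat).
Hypotheses (l_gt0 : (0 < l)%N) (m_gt0 : (0 < m)%N).
Local Notation A := (Alm l m).
Let cL : 'I_(l + m) := lshift m (Ordinal l_gt0).
Let cM : 'I_(l + m) := rshift l (Ordinal m_gt0).

Lemma Alm_entry (c c' : 'I_(l + m)) : A c c' = (c < l)%N || (c' < l)%N.
Proof. by rewrite mxE negb_and -!ltnNge. Qed.

Lemma nforests_Alm_class n (c c' : 'I_(l + m)) :
  (c < l)%N = (c' < l)%N -> nforests A n c = nforests A n c'.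
Proof.
elim/ltn_ind: n c c' => -[|n] IHn c c' eq_cc' //; rewrite !nforestsS.
apply: eq_bigr => k _; rewrite (IHn (n - k)%N _ c c') ?ltnS ?leq_subr //.
by congr (_ * _)%N; apply: eq_bigl => c''; rewrite !Alm_entry eq_cc'.
Qed.

Lemma nforests_Alm n (c : 'I_(l + m)) :
  nforests A n c = nforests A n (if (c < l)%N then cL else cM).
Proof. by apply: nforests_Alm_class; case: ltnP => //= _; rewrite addn0 ltnn. Qed.

Lemma sum_Alm_row (c : 'I_(l + m)) (F : 'I_(l + m) -> nat) :
  (forall c', F c' = F (if (c' < l)%N then cL else cM)) ->
  (\sum_(c' | A c c') F c' = l * F cL + (c < l)%N * (m * F cM))%N.
Proof.
move=> F_class; rewrite big_mkcond big_split_ord /=; congr (_ + _)%N.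
  rewrite (eq_bigr (fun=> F cL)) ?sum_nat_const ?card_ord // => i _.
  by rewrite Alm_entry /= ltn_ord orbT F_class /= ltn_ord.
rewrite (eq_bigr (fun=> (c < l)%N * F cM)%N) ?sum_nat_const ?card_ord; first by rewrite mulnCA.
move=> i _; have lNi : (l + i < l)%N = false by rewrite ltnNge leq_addr.
by rewrite Alm_entry /= lNi orbF F_class /= lNi; case: (c < l)%N; rewrite ?mul1n ?mul0n.
Qed.

Lemma nforestsS_L n : nforests A n.+1 cL =
  (\sum_(k < n.+1) (l * nforests A k cL + m * nforests A k cM) * nforests A (n - k) cL)%N.
Proof.
rewrite nforestsS; apply: eq_bigr => k _.
rewrite sum_Alm_row; last by move=> c'; apply: nforests_Alm.
by rewrite /= l_gt0 mul1n.
Qed.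

Lemma nforestsS_M n : nforests A n.+1 cM =
  (\sum_(k < n.+1) l * nforests A k cL * nforests A (n - k) cM)%N.
Proof.
rewrite nforestsS; apply: eq_bigr => k _.
rewrite sum_Alm_row; last by move=> c'; apply: nforests_Alm.
by rewrite /= ltnNge leq_addr mul0n addn0.
Qed.

Lemma sum_nforests_Alm n :
  (\sum_c nforests A n c = l * nforests A n cL + m * nforests A n cM)%N.
Proof.
have := sum_Alm_row cL (nforests_Alm n); rewrite /= l_gt0 mul1n => <-.
by apply: eq_bigl => c; rewrite Alm_entry /= l_gt0.
Qed.

Variable R : fieldType.
Hypothesis charR0 : [pchar R] =i pred0.
Let a k : R := (nforests A k cL)%:R.
Let b k : R := (nforests A k cM)%:R.

Let a0 : a 0%N = 1. Proof. by rewrite /a nforests0. Qed.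
Let b0 : b 0%N = 1. Proof. by rewrite /b nforests0. Qed.

Let aS n : a n.+1 = \sum_(k < n.+1) (l%:R * a k + m%:R * b k) * a (n - k)%N.
Proof. by rewrite /a nforestsS_L natr_sum; apply: eq_bigr => k _; rewrite natrM natrD !natrM. Qed.

Let bS n : b n.+1 = \sum_(k < n.+1) l%:R * a k * b (n - k)%N.
Proof. by rewrite /b nforestsS_M natr_sum; apply: eq_bigr => k _; rewrite !natrM. Qed.

Lemma nforests_L_closed n : (nforests A n cL)%:R = \sum_(0 <= k < n.+1)
  (1 / n.+1%:R) * ('C(n.+1, k) * 'C(2 * n.+1 - 2, n.+1 - k - 1) * l ^ (n.+1 - k - 1) * m ^ k)%N%:R :> R.
Proof. exact: (a_closed charR0 a0 b0 aS bS). Qed.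

Lemma nforests_M_closed n : (nforests A n.+1 cM)%:R = \sum_(1 <= k < n.+2) (1 / (n.+2 - 1)%N%:R) *
  ('C(n.+2 - 1, k - 1) * 'C(2 * n.+2 - 2, n.+2 - k - 1) * l ^ (n.+2 - k) * m ^ (k - 1))%N%:R :> R.
Proof. exact: (b_closed charR0 a0 b0 aS bS). Qed.

Lemma sum_nforests_closed n : (\sum_c nforests A n.+1 c)%:R = \sum_(0 <= k < n.+2)
  (2%:R / n.+2%:R) * ('C(n.+2, k) * 'C(2 * n.+2 - 3, n.+2 - k - 1) * l ^ (n.+2 - k) * m ^ k)%N%:R :> R.
Proof.
by rewrite sum_nforests_Alm natrD !natrM -(total_closed charR0 a0 b0 aS bS).
Qed.

End AlmCounts.

Theorem theorem33 (l m n : nat) :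
  (0 < l)%N -> (0 < m)%N -> (0 < n)%N ->
  [/\ (2 <= n)%N ->
        tA_is (Alm l m) n
          (\sum_(0 <= k < n)
              (2%:R / n%:R) *
              ('C(n, k) * 'C(2 * n - 3, n - k - 1) * l ^ (n - k) * m ^ k)%N%:R),
      (forall i : 'I_(l + m), (i < l)%N ->
        tAi_is (Alm l m) i n
          (\sum_(0 <= k < n)
              (1 / n%:R) *
              ('C(n, k) * 'C(2 * n - 2, n - k - 1) * l ^ (n - k - 1) * m ^ k)%N%:R))
    & (2 <= n)%N -> forall i : 'I_(l + m), (l <= i)%N ->
        tAi_is (Alm l m) i n
          (\sum_(1 <= k < n)
              (1 / (n - 1)%N%:R) *
              ('C(n - 1, k - 1) * 'C(2 * n - 2, n - k - 1) * l ^ (n - k)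
                 * m ^ (k - 1))%N%:R)].
Proof.
case: n => [|n] // l_gt0 m_gt0 _; have charQ := @pchar_num rat; split.
- case: n => // n _; have := tA_is_nforests (Alm l m) n.+1.
  by rewrite (sum_nforests_closed l_gt0 m_gt0 charQ).
- move=> i lt_il; have := tAi_is_nforests (Alm l m) n i.
  by rewrite (nforests_Alm l_gt0 m_gt0) lt_il (nforests_L_closed l_gt0 m_gt0 charQ).
- case: n => // n _ i le_li; have := tAi_is_nforests (Alm l m) n.+1 i.
  by rewrite (nforests_Alm l_gt0 m_gt0) ltnNge le_li (nforests_M_closed l_gt0 m_gt0 charQ).
Qed.
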